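(* Let $T$ be any fixed full binary tree with leaves identified with $[n]$, and leaf probabilities $q_1,\dots,q_n\in[0,1]$ with $\sum_iq_i=k\in\mathbb Z$. Let $\mu$ be the distribution of the indicator vector $\boldsymbol\xi\in\{0,1\}^n$ of the output of binary-tree pivotal sampling on $T$. Then $\mu$ is $k$-homogeneous, and for every $\mathcal S\subseteq[n]$ with $\Pr[\xi_\ell=1\ \forall\ell\in\mathcal S]>0$ and every $i\in[n]\setminus\mathcal S$ with positive conditioning probability, $$\sum_{j\in[n]}|\mathcal I^{\mathcal S}_\mu(i,j)|=2-2\Pr[\xi_i=1\mid\xi_\ell=1\ \forall\ell\in\mathcal S]\le 2 .$$ In particular $\mu$ is one-sided $\ell_\infty$-independent with parameter $2$.
   Context: Binary-tree pivotal sampling: let $T$ be a full binary tree whose leaves are identified with an index set, and let $q_i\in[0,1]$ be leaf probabilities with integer sum. Each node can store an index together with a current probability; initially each leaf $i$ stores $i$ with probability $q_i$, and the output set $\mathcal S_{\rm out}$ is empty. Repeatedly choose two sibling nodes that both store indices, say $i$ with probability $q_i$ and $j$ with probability $q_j$, with parent $P$, and remove them. If $q_i+q_j\le1$: with probability $q_i/(q_i+q_j)$ store $i$ at $P$ with probability $q_i+q_j$ ($j$ is rejected), otherwise store $j$ at $P$ with probability $q_i+q_j$ ($i$ is rejected). If $q_i+q_j>1$: with probability $(1-q_i)/(2-q_i-q_j)$ put $j$ into $\mathcal S_{\rm out}$ and store $i$ at $P$ with probability $q_i+q_j-1$; otherwise put $i$ into $\mathcal S_{\rm out}$ and store $j$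 at $P$ with probability $q_i+q_j-1$. When only the root stores an index, put it into $\mathcal S_{\rm out}$ iff its probability is $1$. One-sided influence: $\mathcal I^{\mathcal S}_\mu(i,j)=\Pr[\xi_j=1\mid \xi_i=1,\ \xi_\ell=1\ \forall\ell\in\mathcal S]-\Pr[\xi_j=1\mid \xi_\ell=1\ \forall\ell\in\mathcal S]$ (taken to be $0$ for $j\in\mathcal S$); one-sided $\ell_\infty$-independence with parameter $D$ means $\max_i\sum_j|\mathcal I^{\mathcal S}_\mu(i,j)|\le D$ for all $\mathcal S$. $k$-homogeneous: every realization has exactly $k$ ones. *)

From mathcomp Require Import all_boot all_order all_algebra.
Set Implicit Arguments. Unset Strict Implicit. Unset Printing Implicit Defensive.
Import Order.TTheory GRing.Theory Num.Theory.
Local Open Scope ring_scope.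

Inductive btree (n : nat) : Type :=
| BLeaf of 'I_n
| BNode of btree n & btree n.

Fixpoint leaves (n : nat) (t : btree n) : seq 'I_n :=
  match t with
  | BLeaf i => [:: i]
  | BNode l r => leaves l ++ leaves r
  end.

(* State after processing a subtree: (indices already put into S_out,
   index stored at the subtree root, its current probability). *)
Definition pstate (R : Type) (n : nat) := ({set 'I_n} * 'I_n * R)%type.

(* One merge step of two siblings storing (i, qi) and (j, qj); returns the
   branches with their probabilities.  Division uses MathComp's x/0 = 0. *)
Definition pivot_merge (R : realFieldType) (n : nat) (x y : pstate R n)
  : seq (R * pstate R n) :=
  let: (S1, i, qi) := x in
  let: (S2, j, qj) := y in
  let S0 := S1 :|: S2 in
  if qi + qj <= 1 then
    [:: (qi / (qi + qj), (S0, i, qi + qj));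
        (1 - qi / (qi + qj), (S0, j, qi + qj))]
  else
    let p := (1 - qi) / (2 - qi - qj) in
    [:: (p, (j |: S0, i, qi + qj - 1));
        (1 - p, (i |: S0, j, qi + qj - 1))].

(* Distribution (list of weighted branches) of the state after processing
   the whole subtree t; independent randomness in the two subtrees. *)
Fixpoint pivotal_dist (R : realFieldType) (n : nat) (q : 'I_n -> R)
  (t : btree n) : seq (R * pstate R n) :=
  match t with
  | BLeaf i => [:: (1, (set0, i, q i))]
  | BNode l r =>
      let dl := pivotal_dist q l in
      let dr := pivotal_dist q r in
      flatten (flatten
        [seq [seq [seq (x.1 * y.1 * v.1, v.2) | v <- pivot_merge x.2 y.2]
             | y <- dr] | x <- dl])
  end.

Definition pivotal_out (R : realFieldType) (n : nat) (s : pstate R n)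
  : {set 'I_n} :=
  let: (Sx, i, p) := s in if p == 1 then i |: Sx else Sx.

(* The law mu of the output set (equivalently, of its indicator vector xi). *)
Definition pivotal_mu (R : realFieldType) (n : nat) (q : 'I_n -> R)
  (t : btree n) : {set 'I_n} -> R :=
  fun A => \sum_(x <- pivotal_dist q t) x.1 * (pivotal_out x.2 == A)%:R.

Definition prob (R : realFieldType) (n : nat) (mu : {set 'I_n} -> R)
  (P : pred {set 'I_n}) : R := \sum_(A | P A) mu A.

Definition cond_prob (R : realFieldType) (n : nat) (mu : {set 'I_n} -> R)
  (P Q : pred {set 'I_n}) : R := prob mu (predI P Q) / prob mu Q.

Definition k_homogeneous (R : realFieldType) (n : nat)
  (mu : {set 'I_n} -> R) (k : int) : Prop :=
  forall A : {set 'I_n}, 0 < mu A -> (#|A|%:Z = k).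

Definition influence (R : realFieldType) (n : nat) (mu : {set 'I_n} -> R)
  (S : {set 'I_n}) (i j : 'I_n) : R :=
  if j \in S then 0 else
    cond_prob mu (fun A => j \in A) (fun A => (i \in A) && (S \subset A))
    - cond_prob mu (fun A => j \in A) (fun A => S \subset A).

(* One-sided l_infty-independence with parameter D (only over conditionings
   with positive probability, where the conditional laws are defined). *)
Definition one_sided_linf_indep (R : realFieldType) (n : nat)
  (mu : {set 'I_n} -> R) (D : R) : Prop :=
  forall S : {set 'I_n}, 0 < prob mu (fun A => S \subset A) ->
  forall i : 'I_n, 0 < prob mu (fun A => (i \in A) && (S \subset A)) ->
  \sum_(j : 'I_n) `|influence mu S i j| <= D.

From mathcomp Require Import all_boot all_order all_algebra.
From mathcomp Require Import ring lra.
Import Order.TTheory GRing.Theory Num.Theory.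
Local Open Scope ring_scope.
Set Implicit Arguments. Unset Strict Implicit. Unset Printing Implicit Defensive.

(* For a k-homogeneous law the influences of i given S sum to 0, and the
   diagonal one equals 1 - Pr[i | S]; so if all off-diagonal influences are
   nonpositive, the absolute sum is 2 - 2 Pr[i | S].  Off-diagonal
   nonpositivity is the negative correlation
   Pr[S+i+j] Pr[S] <= Pr[S+i] Pr[S+j].  To prove it for pivotal sampling, track
   through the tree, for a product weight phi, the pair of expectations of
   prod_k phi k [k is output] with the index stored at the current root counted
   as not output, resp. as output.  A merge acts bilinearly on these pairs;
   the 2x2 determinant of the pairs for "i forced in" / "i free" keeps its
   sign, and Cauchy-Binet for 2x2 matrices propagates the inequality when i
   and j sit in different subtrees. *)

Lemma sumr_norm_sum0 (R : realDomainType) (I : finType) (i : I) (f : I -> R) :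
  \sum_j f j = 0 -> (forall j, j != i -> f j <= 0) -> \sum_j `|f j| = 2 * f i.
Proof.
move=> sum0 neg; move: sum0; rewrite (bigD1 i) //= => /eqP; rewrite addr_eq0.
move=> /eqP rest; rewrite (bigD1 i) //=.
have -> : \sum_(j | j != i) `|f j| = - \sum_(j | j != i) f j.
  by rewrite -sumrN; apply: eq_bigr => j /neg /ler0_norm.
have fi0 : 0 <= f i.
  by rewrite rest oppr_ge0; apply: sumr_le0 => j /neg.
by rewrite -rest ger0_norm // mulr2n mulrDl mul1r.
Qed.

Section PairAlgebra.
Variable R : realFieldType.
Implicit Types (u w : R * R) (b : bool) (c al be : R).

Definition pscale (a : R) u : R * R := (a * u.1, a * u.2).

Definition cross u w : R := u.1 * w.2 - u.2 * w.1.

Definition lin al be u : R := al * u.1 + be * u.2.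

(* [u] and [w] describe the left and right subtree; [b] tells whether the two
   root probabilities sum to at most 1, and [c] is the probability that the
   left index is the one kept at the parent. *)
Definition wexp_merge b c u w : R * R :=
  if b then (u.1 * w.1, c * u.2 * w.1 + (1 - c) * u.1 * w.2)
  else (c * u.1 * w.2 + (1 - c) * u.2 * w.1, u.2 * w.2).

Definition lin_anticorr (u11 u10 u01 u00 : R * R) : Prop :=
  forall al be, 0 <= al -> 0 <= be ->
  lin al be u11 * lin al be u00 <= lin al be u10 * lin al be u01.

Lemma fst_add u w : (u + w).1 = u.1 + w.1. Proof. by []. Qed.
Lemma snd_add u w : (u + w).2 = u.2 + w.2. Proof. by []. Qed.

Lemma pscale_sumr (I : Type) (s : seq I) (a : R) (F : I -> R * R) :
  pscale a (\sum_(i <- s) F i) = \sum_(i <- s) pscale a (F i).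
Proof.
elim: s => [|i s IH]; rewrite ?big_nil ?big_cons -?IH /pscale /=.
  by congr pair; rewrite mulr0.
by congr pair; rewrite ?fst_add ?snd_add mulrDr.
Qed.

Lemma pscaleA (a a' : R) u : pscale a (pscale a' u) = pscale (a * a') u.
Proof. by rewrite /pscale /= !mulrA. Qed.

Lemma lin_sum (I : Type) (s : seq I) (f : I -> R) (F : I -> R * R) al be :
  lin al be (\sum_(i <- s) pscale (f i) (F i)) = \sum_(i <- s) f i * lin al be (F i).
Proof.
elim: s => [|i s IH]; rewrite ?big_nil ?big_cons -?IH /lin /= ?fst_add ?snd_add.
  by rewrite !mulr0 addr0.
by ring.
Qed.

Lemma wexp_merge_suml b c (I : Type) (s : seq I) (f : I -> R) (F : I -> R * R) w :
  wexp_merge b c (\sum_(i <- s) pscale (f i) (F i)) w =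
  \sum_(i <- s) pscale (f i) (wexp_merge b c (F i) w).
Proof.
case: b; elim: s => [|i s IH]; rewrite ?big_nil ?big_cons -?IH /wexp_merge /pscale;
  by congr pair; rewrite ?fst_add ?snd_add /=; ring.
Qed.

Lemma wexp_merge_sumr b c (I : Type) (s : seq I) (f : I -> R) (F : I -> R * R) u :
  wexp_merge b c u (\sum_(i <- s) pscale (f i) (F i)) =
  \sum_(i <- s) pscale (f i) (wexp_merge b c u (F i)).
Proof.
case: b; elim: s => [|i s IH]; rewrite ?big_nil ?big_cons -?IH /wexp_merge /pscale;
  by congr pair; rewrite ?fst_add ?snd_add /=; ring.
Qed.

Lemma wexp_merge_sum b c (I J : Type) (s1 : seq I) (s2 : seq J)
    (f : I -> R) (g : J -> R) (F : I -> R * R) (G : J -> R * R) :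
  wexp_merge b c (\sum_(i <- s1) pscale (f i) (F i))
                 (\sum_(j <- s2) pscale (g j) (G j)) =
  \sum_(i <- s1) \sum_(j <- s2) pscale (f i * g j) (wexp_merge b c (F i) (G j)).
Proof.
rewrite wexp_merge_suml; apply: eq_bigr => i _.
by rewrite wexp_merge_sumr pscale_sumr; apply: eq_bigr => j _; rewrite pscaleA.
Qed.

Section MergeCoefficient.
Variables (b : bool) (c : R).
Hypothesis c_ge0 : 0 <= c.
Hypothesis c_le1 : c <= 1.

Lemma cross_wexp_mergel u1 u0 w :
  cross u1 u0 <= 0 -> cross (wexp_merge b c u1 w) (wexp_merge b c u0 w) <= 0.
Proof.
move=> neg; have -> : cross (wexp_merge b c u1 w) (wexp_merge b c u0 w) =
    c * (if b then w.1 else w.2) ^+ 2 * cross u1 u0.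
  by case: b; rewrite /cross /wexp_merge /=; ring.
by rewrite mulr_ge0_le0 // mulr_ge0 // sqr_ge0.
Qed.

Lemma cross_wexp_merger u w1 w0 :
  cross w1 w0 <= 0 -> cross (wexp_merge b c u w1) (wexp_merge b c u w0) <= 0.
Proof.
move=> neg; have -> : cross (wexp_merge b c u w1) (wexp_merge b c u w0) =
    (1 - c) * (if b then u.1 else u.2) ^+ 2 * cross w1 w0.
  by case: b; rewrite /cross /wexp_merge /=; ring.
by rewrite mulr_ge0_le0 // mulr_ge0 ?sqr_ge0 // subr_ge0.
Qed.

Lemma lin_wexp_mergel al be w : 0 <= al -> 0 <= be -> 0 <= w.1 -> 0 <= w.2 ->
  exists al' be', [/\ 0 <= al', 0 <= be' &
    forall u, lin al be (wexp_merge b c u w) = lin al' be' u].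
Proof.
move=> al0 be0 w10 w20; have c1 : 0 <= 1 - c by rewrite subr_ge0.
case: b.
- exists (al * w.1 + be * (1 - c) * w.2), (be * c * w.1).
  by split=> [||u]; rewrite /lin /wexp_merge /=; [|by rewrite !mulr_ge0|ring];
    rewrite addr_ge0 ?mulr_ge0.
- exists (al * c * w.2), (al * (1 - c) * w.1 + be * w.2).
  by split=> [||u]; rewrite /lin /wexp_merge /=; [by rewrite !mulr_ge0| |ring];
    rewrite addr_ge0 ?mulr_ge0.
Qed.

Lemma lin_wexp_merger al be u : 0 <= al -> 0 <= be -> 0 <= u.1 -> 0 <= u.2 ->
  exists al' be', [/\ 0 <= al', 0 <= be' &
    forall w, lin al be (wexp_merge b c u w) = lin al' be' w].
Proof.
move=> al0 be0 u10 u20; have c1 : 0 <= 1 - c by rewrite subr_ge0.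
case: b.
- exists (al * u.1 + be * c * u.2), (be * (1 - c) * u.1).
  by split=> [||w]; rewrite /lin /wexp_merge /=; [|by rewrite !mulr_ge0|ring];
    rewrite addr_ge0 ?mulr_ge0.
- exists (al * (1 - c) * u.2), (al * c * u.1 + be * u.2).
  by split=> [||w]; rewrite /lin /wexp_merge /=; [by rewrite !mulr_ge0| |ring];
    rewrite addr_ge0 ?mulr_ge0.
Qed.

Lemma lin_anticorr_wexp_mergel u11 u10 u01 u00 w : 0 <= w.1 -> 0 <= w.2 ->
  lin_anticorr u11 u10 u01 u00 ->
  lin_anticorr (wexp_merge b c u11 w) (wexp_merge b c u10 w)
               (wexp_merge b c u01 w) (wexp_merge b c u00 w).
Proof.
move=> w10 w20 anti al be al0 be0.
have [al' [be' [al'0 be'0 linE]]] := lin_wexp_mergel al0 be0 w10 w20.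
by rewrite !linE; exact: anti.
Qed.

Lemma lin_anticorr_wexp_merger u w11 w10 w01 w00 : 0 <= u.1 -> 0 <= u.2 ->
  lin_anticorr w11 w10 w01 w00 ->
  lin_anticorr (wexp_merge b c u w11) (wexp_merge b c u w10)
               (wexp_merge b c u w01) (wexp_merge b c u w00).
Proof.
move=> u10 u20 anti al be al0 be0.
have [al' [be' [al'0 be'0 linE]]] := lin_wexp_merger al0 be0 u10 u20.
by rewrite !linE; exact: anti.
Qed.

(* Cauchy-Binet: the defect is det M * cross u1 u0 * cross w1 w0, where
   det M = - c (1 - c) (be or al)^2 is the determinant of the bilinear form. *)
Lemma lin_anticorr_wexp_merge_split u1 u0 w1 w0 :
  cross u1 u0 <= 0 -> cross w1 w0 <= 0 ->
  lin_anticorr (wexp_merge b c u1 w1) (wexp_merge b c u1 w0)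
               (wexp_merge b c u0 w1) (wexp_merge b c u0 w0).
Proof.
move=> cu cw al be _ _; rewrite -subr_le0.
have -> : lin al be (wexp_merge b c u1 w1) * lin al be (wexp_merge b c u0 w0) -
          lin al be (wexp_merge b c u1 w0) * lin al be (wexp_merge b c u0 w1) =
    - (c * (1 - c) * (if b then be else al) ^+ 2) * (cross u1 u0 * cross w1 w0).
  by case: b; rewrite /lin /cross /wexp_merge /=; ring.
have c1 : 0 <= 1 - c by rewrite subr_ge0.
rewrite mulNr oppr_le0; apply: mulr_ge0; last exact: mulr_le0.
by rewrite mulr_ge0 ?sqr_ge0 ?mulr_ge0.
Qed.

End MergeCoefficient.

Lemma lin_anticorrC u11 u10 u01 u00 :
  lin_anticorr u11 u10 u01 u00 -> lin_anticorr u11 u01 u10 u00.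
Proof. by move=> anti al be al0 be0; rewrite [X in _ <= X]mulrC; exact: anti. Qed.

End PairAlgebra.

Lemma divr_ge0_le1 (R : realFieldType) (x y : R) :
  0 <= x -> x <= y -> 0 <= x / y <= 1.
Proof.
move=> x0 xy; have [->|y0] := eqVneq y 0; first by rewrite invr0 mulr0 lexx ler01.
have yp : 0 < y by rewrite lt_def y0 (le_trans x0 xy).
by rewrite divr_ge0 ?(le_trans x0 xy) //= ler_pdivrMr // mul1r.
Qed.

Section Influence.
Variables (R : realFieldType) (n : nat).
Implicit Types (mu : {set 'I_n} -> R) (S T : {set 'I_n}) (i j : 'I_n).

Definition prob_superset mu T : R := prob mu (fun A => T \subset A).

Definition cond_neg_correlated mu : Prop :=
  forall S i j, i \notin S -> j \notin S -> i != j ->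
  prob_superset mu (j |: (i |: S)) * prob_superset mu S <=
  prob_superset mu (j |: S) * prob_superset mu (i |: S).

Lemma prob_mem_subset mu S i :
  prob mu (fun A => (i \in A) && (S \subset A)) = prob_superset mu (i |: S).
Proof. by apply: eq_bigl => A; rewrite subUset sub1set. Qed.

Lemma cond_prob_superset mu S i :
  cond_prob mu (fun A => i \in A) (fun A => S \subset A) =
  prob_superset mu (i |: S) / prob_superset mu S.
Proof. by rewrite /cond_prob -prob_mem_subset. Qed.

Lemma influence_superset mu S i j :
  influence mu S i j = if j \in S then 0 else
    prob_superset mu (j |: (i |: S)) / prob_superset mu (i |: S) -
    prob_superset mu (j |: S) / prob_superset mu S.
Proof.
rewrite /influence /cond_prob -!prob_mem_subset; case: (j \in S) => //.
by congr (_ / _ - _ / _); apply: eq_bigl => A; rewrite /= ?subUset ?sub1set.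
Qed.

Lemma influence_memS mu S i j : i \in S -> influence mu S i j = 0.
Proof.
move=> iS; rewrite influence_superset.
have -> : i |: S = S by apply/setUidPr; rewrite sub1set.
by rewrite subrr if_same.
Qed.

Lemma prob_superset_sum mu T :
  prob_superset mu T = \sum_A mu A * (T \subset A)%:R.
Proof.
rewrite /prob_superset /prob big_mkcond; apply: eq_bigr => A _.
by case: (_ \subset _); rewrite ?mulr1 ?mulr0.
Qed.

Lemma sum_superset_homogeneous mu (k : int) S T :
  (forall A, mu A != 0 -> #|A|%:Z = k) -> S \subset T ->
  \sum_j (if j \in S then 0 else prob_superset mu (j |: T)) =
  (k%:~R - #|S|%:R) * prob_superset mu T.
Proof.
move=> hom ST.
have summand j : (if j \in S then 0 else prob_superset mu (j |: T)) =
    \sum_A mu A * (T \subset A)%:R * ((j \notin S) && (j \in A))%:R.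
  rewrite prob_superset_sum; case: (j \in S) => /=.
    by rewrite big1 // => A _; rewrite mulr0.
  apply: eq_bigr => A _; rewrite subUset sub1set.
  by case: (j \in A); case: (T \subset A); rewrite ?mulr1 ?mulr0 ?mul0r.
rewrite (eq_bigr _ (fun j _ => summand j)) exchange_big prob_superset_sum mulr_sumr.
apply: eq_bigr => A _; rewrite -mulr_sumr.
case: (boolP (T \subset A)) => TA /=; last by rewrite !mulr0 mul0r.
have SA := subset_trans ST TA.
have [->|mu0] := eqVneq (mu A) 0; first by rewrite !(mul0r, mulr0).
have -> : \sum_j ((j \notin S) && (j \in A))%:R = #|A|%:R - #|S|%:R :> R.
  rewrite -!sum1_card !natr_sum [in RHS](big_mkcond (mem A))
    [in RHS](big_mkcond (mem S)) /= -sumrB.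
  apply: eq_bigr => j _; case: (boolP (j \in S)) => jS /=.
    by rewrite (subsetP SA _ jS) subrr.
  by case: (j \in A); rewrite subr0.
by rewrite -(hom A mu0) mulr1; ring.
Qed.

Section Conditioned.
Variables (mu : {set 'I_n} -> R) (S : {set 'I_n}) (i : 'I_n).
Hypothesis iS : i \notin S.
Hypothesis PS_gt0 : 0 < prob_superset mu S.
Hypothesis PiS_gt0 : 0 < prob_superset mu (i |: S).

Lemma sum_influence_eq0 (k : int) :
  (forall A, mu A != 0 -> #|A|%:Z = k) -> \sum_j influence mu S i j = 0.
Proof.
move=> hom; have split_if j : influence mu S i j =
    (if j \in S then 0 else prob_superset mu (j |: (i |: S))) / prob_superset mu (i |: S)
    - (if j \in S then 0 else prob_superset mu (j |: S)) / prob_superset mu S.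
  by rewrite influence_superset; case: (j \in S); rewrite ?mul0r ?subr0.
rewrite (eq_bigr _ (fun j _ => split_if j)) sumrB -!mulr_suml.
rewrite (sum_superset_homogeneous hom (subsetUr _ _)).
rewrite (sum_superset_homogeneous hom (subxx _)).
by rewrite !mulfK ?subrr // gt_eqF.
Qed.

Lemma influence_le0 j :
  cond_neg_correlated mu -> j != i -> influence mu S i j <= 0.
Proof.
move=> ncor ji; rewrite influence_superset; case: (boolP (j \in S)) => // jS.
rewrite subr_le0 ler_pdivrMr // mulrAC ler_pdivlMr //.
by apply: ncor; rewrite // eq_sym.
Qed.

Lemma influence_self :
  influence mu S i i = 1 - prob_superset mu (i |: S) / prob_superset mu S.
Proof. by rewrite influence_superset (negPf iS) setUA setUid divff // gt_eqF. Qed.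

Lemma sum_norm_influence (k : int) :
  (forall A, mu A != 0 -> #|A|%:Z = k) -> cond_neg_correlated mu ->
  \sum_j `|influence mu S i j| =
  2 - 2 * (prob_superset mu (i |: S) / prob_superset mu S).
Proof.
move=> hom ncor; rewrite (sumr_norm_sum0 (i := i) (sum_influence_eq0 hom)).
  by rewrite influence_self mulrBr mulr1.
by move=> j; exact: influence_le0.
Qed.

End Conditioned.

End Influence.

Section PivotalInvariant.
Variables (R : realFieldType) (n : nat) (q : 'I_n -> R).
Hypothesis q01 : forall i, 0 <= q i <= 1.

Fixpoint root_prob (t : btree n) : R :=
  match t with
  | BLeaf i => q i
  | BNode l r =>
      let s := root_prob l + root_prob r in if s <= 1 then s else s - 1
  end.

Lemma root_prob_ge0_le1 t : 0 <= root_prob t <= 1.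
Proof.
elim: t => [i|l /andP [? ?] r /andP [? ?]] /=; first exact: q01.
by case: ifP => ?; apply/andP; split; lra.
Qed.

Lemma uniq_leaves_node (l r : btree n) : uniq (leaves (BNode l r)) ->
  [/\ uniq (leaves l), uniq (leaves r) & forall k, k \in leaves l -> k \notin leaves r].
Proof.
rewrite /= cat_uniq => /and3P [ul /hasPn lr ur]; split=> // k kl.
by apply/negP => /lr; rewrite kl.
Qed.

Lemma mem_pivotal_dist_node l r x : x \in pivotal_dist q (BNode l r) ->
  exists a b v, [/\ a \in pivotal_dist q l, b \in pivotal_dist q r,
     v \in pivot_merge a.2 b.2 & x = (a.1 * b.1 * v.1, v.2)].
Proof.
rewrite /=; case/flattenP => s /flatten_mapP [a ha] /mapP [b hb ->].
by case/mapP => v hv ->; exists a, b, v.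
Qed.

Definition pstate_in (L : seq 'I_n) (x : pstate R n) : Prop :=
  [/\ x.1.2 \in L, {subset x.1.1 <= L} & x.1.2 \notin x.1.1].

Lemma pivot_merge_inv (L1 L2 : seq 'I_n) (a b : pstate R n) v :
  0 <= a.2 <= 1 -> 0 <= b.2 <= 1 -> pstate_in L1 a -> pstate_in L2 b ->
  (forall k, k \in L1 -> k \notin L2) -> v \in pivot_merge a b ->
  [/\ 0 <= v.1, v.2.2 = (if a.2 + b.2 <= 1 then a.2 + b.2 else a.2 + b.2 - 1),
      pstate_in (L1 ++ L2) v.2 &
      #|v.2.1.1|%:R + v.2.2 = #|a.1.1|%:R + a.2 + (#|b.1.1|%:R + b.2)].
Proof.
case: a b => [[Sa sa] pa] [[Sb sb] pb] /= /andP [pa0 pa1] /andP [pb0 pb1].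
case=> /= saL SaL saS [/= sbL SbL sbS] L12.
have saSb : sa \notin Sb by apply: contra (L12 _ saL) => /SbL.
have sbSa : sb \notin Sa by apply/negP => /SaL /L12; rewrite sbL.
have sasb : sa != sb by apply: contraTneq sbL => <-; exact: L12.
have card_SaSb : #|Sa :|: Sb| = (#|Sa| + #|Sb|)%N.
  apply/eqP; rewrite (leq_card_setU Sa Sb).2.
  by apply/pred0P => k /=; apply/negbTE/negP => /andP [/SaL /L12 /negP nk /SbL].
have sub_SaSb : {subset Sa :|: Sb <= L1 ++ L2}.
  by move=> k; rewrite inE mem_cat => /orP [/SaL -> | /SbL ->]; rewrite ?orbT.
have /andP [c0 c1] : 0 <= pa / (pa + pb) <= 1 by apply: divr_ge0_le1; lra.
have /andP [p0 p1] : 0 <= (1 - pa) / (2 - pa - pb) <= 1 by apply: divr_ge0_le1; lra.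
rewrite /pivot_merge; case: ifP => _; rewrite !inE => /orP [] /eqP -> /=.
- split; rewrite ?subr_ge0 //; first split.
  + by rewrite mem_cat saL.
  + exact: sub_SaSb.
  + by rewrite inE negb_or saS saSb.
  by rewrite card_SaSb natrD; ring.
- split; rewrite ?subr_ge0 //; first split.
  + by rewrite mem_cat sbL orbT.
  + exact: sub_SaSb.
  + by rewrite inE negb_or sbSa sbS.
  by rewrite card_SaSb natrD; ring.
- split; rewrite ?subr_ge0 //; first split.
  + by rewrite mem_cat saL.
  + by move=> k /setU1P [-> | /sub_SaSb //]; rewrite mem_cat sbL orbT.
  + by rewrite !inE !negb_or sasb saS saSb.
  by rewrite cardsU1 !inE negb_or sbSa sbS card_SaSb /= !natrD; ring.
- split; rewrite ?subr_ge0 //; first split.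
  + by rewrite mem_cat sbL orbT.
  + by move=> k /setU1P [-> | /sub_SaSb //]; rewrite mem_cat saL.
  + by rewrite !inE !negb_or eq_sym sasb sbSa sbS.
  by rewrite cardsU1 !inE negb_or saS saSb card_SaSb /= !natrD; ring.
Qed.

Lemma pivotal_dist_inv t : uniq (leaves t) -> forall x, x \in pivotal_dist q t ->
  [/\ 0 <= x.1, x.2.2 = root_prob t, pstate_in (leaves t) x.2 &
      #|x.2.1.1|%:R + x.2.2 = \sum_(k <- leaves t) q k].
Proof.
elim: t => [i|l IHl r IHr] /=.
  move=> _ x; rewrite inE => /eqP -> /=.
  by split => //; [split; rewrite ?inE // => k; rewrite inE | rewrite cards0 add0r big_seq1].
move=> /uniq_leaves_node [ul ur L12] x /mem_pivotal_dist_node [a [b [v []]]].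
move=> /(IHl ul) [a0 pa aL ca] /(IHr ur) [b0 pb bL cb] hv ->.
have a01 : 0 <= a.2.2 <= 1 by rewrite pa root_prob_ge0_le1.
have b01 : 0 <= b.2.2 <= 1 by rewrite pb root_prob_ge0_le1.
have [v0 pv vL cv] := pivot_merge_inv a01 b01 aL bL L12 hv.
split => //=; first by rewrite !mulr_ge0.
  by rewrite pv pa pb.
by rewrite cv ca cb big_cat.
Qed.

End PivotalInvariant.

Section WeightedExpectation.
Variables (R : realFieldType) (n : nat) (q : 'I_n -> R).
Hypothesis q01 : forall i, 0 <= q i <= 1.
Implicit Types (phi psi : 'I_n -> bool -> R) (L : seq 'I_n) (t l r : btree n).

Definition wprod phi L (A : {set 'I_n}) : R := \prod_(k <- L) phi k (k \in A).

Definition wpair phi L (x : pstate R n) : R * R :=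
  (wprod phi L x.1.1, wprod phi L (x.1.2 |: x.1.1)).

Definition pivotal_wexp phi t : R * R :=
  \sum_(x <- pivotal_dist q t) pscale x.1 (wpair phi (leaves t) x.2).

Definition merge_coef (pl pr : R) : R :=
  if pl + pr <= 1 then pl / (pl + pr) else (1 - pl) / (2 - pl - pr).

Lemma merge_coef_ge0_le1 pl pr :
  0 <= pl <= 1 -> 0 <= pr <= 1 -> 0 <= merge_coef pl pr <= 1.
Proof.
move=> /andP [? ?] /andP [? ?]; rewrite /merge_coef.
by case: ifP => ?; apply: divr_ge0_le1; lra.
Qed.

Lemma wprod_cat phi L1 L2 (A B : {set 'I_n}) :
  {subset A <= L1} -> {subset B <= L2} -> (forall k, k \in L1 -> k \notin L2) ->
  wprod phi (L1 ++ L2) (A :|: B) = wprod phi L1 A * wprod phi L2 B.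
Proof.
move=> AL BL L12; rewrite /wprod big_cat; congr (_ * _); apply: eq_big_seq => k kL;
  rewrite inE.
  by rewrite (negPf (contra (@BL k) (L12 _ kL))) orbF.
by have /negPf -> : k \notin A by apply/negP => /AL /L12; rewrite kL.
Qed.

Lemma pivot_merge_wexp phi L1 L2 (a b : pstate R n) :
  pstate_in L1 a -> pstate_in L2 b -> (forall k, k \in L1 -> k \notin L2) ->
  \sum_(v <- pivot_merge a b) pscale v.1 (wpair phi (L1 ++ L2) v.2) =
  wexp_merge (a.2 + b.2 <= 1) (merge_coef a.2 b.2) (wpair phi L1 a) (wpair phi L2 b).
Proof.
case: a b => [[Sa sa] pa] [[Sb sb] pb] [/= saL SaL _] [/= sbL SbL _] L12.
have saSaL : {subset sa |: Sa <= L1} by move=> k /setU1P [-> | /SaL].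
have sbSbL : {subset sb |: Sb <= L2} by move=> k /setU1P [-> | /SbL].
have catE A B := wprod_cat phi A B L12.
have E1 : sa |: (Sa :|: Sb) = (sa |: Sa) :|: Sb by rewrite setUA.
have E2 : sb |: (Sa :|: Sb) = Sa :|: (sb |: Sb) by rewrite setUCA.
have E3 : sa |: (sb |: (Sa :|: Sb)) = (sa |: Sa) :|: (sb |: Sb).
  by rewrite E2 [LHS]setUA.
have E4 : sb |: (sa |: (Sa :|: Sb)) = (sa |: Sa) :|: (sb |: Sb).
  by rewrite E1 [LHS]setUCA.
rewrite /pivot_merge /merge_coef /wpair /wexp_merge /=.
case: ifP => _; rewrite !big_cons big_nil addr0 /pscale /=; congr pair;
  by rewrite ?fst_add ?snd_add /= ?E3 ?E4 ?E1 ?E2 !catE //; ring.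
Qed.

Lemma sum_pivotal_node l r (F : pstate R n -> R * R) :
  \sum_(x <- pivotal_dist q (BNode l r)) pscale x.1 (F x.2) =
  \sum_(a <- pivotal_dist q l) \sum_(b <- pivotal_dist q r)
     pscale (a.1 * b.1) (\sum_(v <- pivot_merge a.2 b.2) pscale v.1 (F v.2)).
Proof.
rewrite /= big_flatten /= big_flatten /= big_map; apply: eq_bigr => a _.
rewrite big_map; apply: eq_bigr => b _; rewrite big_map pscale_sumr.
by apply: eq_bigr => v _; rewrite pscaleA.
Qed.

Lemma pivotal_wexp_node phi l r : uniq (leaves (BNode l r)) ->
  pivotal_wexp phi (BNode l r) =
  wexp_merge (root_prob q l + root_prob q r <= 1)
    (merge_coef (root_prob q l) (root_prob q r))
    (pivotal_wexp phi l) (pivotal_wexp phi r).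
Proof.
move=> /uniq_leaves_node [ul ur L12].
rewrite /pivotal_wexp wexp_merge_sum sum_pivotal_node.
apply: eq_big_seq => a ha; apply: eq_big_seq => b hb.
have [_ pa aL _] := pivotal_dist_inv q01 ul ha.
have [_ pb bL _] := pivotal_dist_inv q01 ur hb.
by rewrite (pivot_merge_wexp phi aL bL L12) pa pb.
Qed.

Lemma pivotal_wexp_leaf phi i : pivotal_wexp phi (BLeaf i) = (phi i false, phi i true).
Proof.
by rewrite /pivotal_wexp /wpair /wprod /pscale /= !big_seq1 /= !inE eqxx !mul1r.
Qed.

Lemma eq_pivotal_wexp phi psi t :
  {in leaves t, phi =1 psi} -> pivotal_wexp phi t = pivotal_wexp psi t.
Proof.
move=> eq_phi; apply: eq_bigr => x _; rewrite /wpair /wprod.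
by congr (pscale _ (_, _)); apply: eq_big_seq => k /eq_phi ->.
Qed.

Lemma pivotal_wexp_ge0 phi t : uniq (leaves t) -> (forall k b, 0 <= phi k b) ->
  0 <= (pivotal_wexp phi t).1 /\ 0 <= (pivotal_wexp phi t).2.
Proof.
move=> ut phi0; have lin_ge0 al be : 0 <= al -> 0 <= be ->
    0 <= lin al be (pivotal_wexp phi t).
  move=> al0 be0; rewrite lin_sum big_seq sumr_ge0 // => x hx.
  have [x0 _ _ _] := pivotal_dist_inv q01 ut hx.
  by rewrite mulr_ge0 // addr_ge0 // mulr_ge0 // prodr_ge0.
by split; [move: (lin_ge0 1 0) | move: (lin_ge0 0 1)];
  rewrite /lin !mul1r !mul0r ?addr0 ?add0r; apply; rewrite ?ler01.
Qed.

End WeightedExpectation.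

Section TreeInequalities.
Variables (R : realFieldType) (n : nat) (q : 'I_n -> R).
Hypothesis q01 : forall i, 0 <= q i <= 1.
Implicit Types (phi : 'I_n -> bool -> R) (X Y : bool -> R) (t : btree n).

Definition reweight phi (i : 'I_n) X : 'I_n -> bool -> R :=
  fun k => if k == i then X else phi k.

Definition win : bool -> R := fun b => b%:R.
Definition wany : bool -> R := fun=> 1.

Lemma pivotal_wexp_reweight_out phi i X t : i \notin leaves t ->
  pivotal_wexp q (reweight phi i X) t = pivotal_wexp q phi t.
Proof.
move=> it; apply: eq_pivotal_wexp => k kt; rewrite /reweight.
by case: eqP => // ki; move: it; rewrite -ki kt.
Qed.

Lemma pivotal_wexp_reweight_out2 phi i j X Y t : i \notin leaves t ->
  pivotal_wexp q (reweight (reweight phi i X) j Y) t =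
  pivotal_wexp q (reweight phi j Y) t.
Proof.
move=> it; apply: eq_pivotal_wexp => k kt; rewrite /reweight.
by case: eqP => // _; case: eqP => // ki; move: it; rewrite -ki kt.
Qed.

Lemma pivotal_wexp_cross phi i t : uniq (leaves t) -> i \in leaves t ->
  cross (pivotal_wexp q (reweight phi i win) t) (pivotal_wexp q (reweight phi i wany) t)
    <= 0.
Proof.
elim: t => [i'|l IHl r IHr] ut it.
  move: it; rewrite mem_seq1 => /eqP ->.
  by rewrite !pivotal_wexp_leaf /cross /reweight eqxx /win /wany /= mul0r sub0r mul1r oppr_le0.
have [ul ur L12] := uniq_leaves_node ut.
have /andP [c0 c1] := merge_coef_ge0_le1 (root_prob_ge0_le1 q01 l) (root_prob_ge0_le1 q01 r).
rewrite !pivotal_wexp_node //; move: it; rewrite mem_cat => /orP [il | ir].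
  rewrite !(pivotal_wexp_reweight_out _ _ (L12 _ il)).
  by apply: cross_wexp_mergel => //; exact: IHl.
have il : i \notin leaves l by apply/negP => /L12; rewrite ir.
rewrite !(pivotal_wexp_reweight_out _ _ il).
by apply: cross_wexp_merger => //; exact: IHr.
Qed.

Lemma pivotal_wexp_anticorr phi i j t :
  uniq (leaves t) -> (forall k b, 0 <= phi k b) ->
  i \in leaves t -> j \in leaves t -> i != j ->
  let W X Y := pivotal_wexp q (reweight (reweight phi i X) j Y) t in
  lin_anticorr (W win win) (W win wany) (W wany win) (W wany wany).
Proof.
move=> + phi0 + + ij; elim: t => [i'|l IHl r IHr] ut it jt.
  by move: it jt ij; rewrite !mem_seq1 => /eqP -> /eqP ->; rewrite eqxx.
have [ul ur L12] := uniq_leaves_node ut.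
have notin_l k : k \in leaves r -> k \notin leaves l.
  by move=> kr; apply/negP => /L12; rewrite kr.
have /andP [c0 c1] := merge_coef_ge0_le1 (root_prob_ge0_le1 q01 l) (root_prob_ge0_le1 q01 r).
have [gl1 gl2] := pivotal_wexp_ge0 q01 ul phi0.
have [gr1 gr2] := pivotal_wexp_ge0 q01 ur phi0.
rewrite /= !pivotal_wexp_node //.
move: it jt; rewrite !mem_cat => /orP [il | ir] /orP [jl | jr].
- rewrite !(pivotal_wexp_reweight_out _ _ (L12 _ jl)).
  rewrite !(pivotal_wexp_reweight_out _ _ (L12 _ il)).
  by apply: lin_anticorr_wexp_mergel => //; exact: IHl.
- rewrite !(pivotal_wexp_reweight_out _ _ (notin_l _ jr)).
  rewrite !(pivotal_wexp_reweight_out2 _ _ _ _ (L12 _ il)).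
  by apply: lin_anticorr_wexp_merge_split => //;
    [exact: pivotal_wexp_cross | exact: pivotal_wexp_cross].
- rewrite !(pivotal_wexp_reweight_out2 _ _ _ _ (notin_l _ ir)).
  rewrite !(pivotal_wexp_reweight_out _ _ (L12 _ jl)).
  by apply/lin_anticorrC/lin_anticorr_wexp_merge_split => //;
    [exact: pivotal_wexp_cross | exact: pivotal_wexp_cross].
- rewrite !(pivotal_wexp_reweight_out _ _ (notin_l _ jr)).
  rewrite !(pivotal_wexp_reweight_out _ _ (notin_l _ ir)).
  by apply: lin_anticorr_wexp_merger => //; exact: IHr.
Qed.

End TreeInequalities.

Arguments win {R}.
Arguments wany {R}.

Section PivotalLaw.
Variables (R : realFieldType) (n : nat) (q : 'I_n -> R) (t : btree n).
Hypothesis q01 : forall i, 0 <= q i <= 1.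
Hypothesis leaves_t : perm_eq (leaves t) (enum 'I_n).

Let uniq_t : uniq (leaves t).
Proof. by rewrite (perm_uniq leaves_t) enum_uniq. Qed.

Let mem_t k : k \in leaves t.
Proof. by rewrite (perm_mem leaves_t) mem_enum. Qed.

Lemma card_pivotal_out (k : int) : \sum_i q i = k%:~R ->
  forall x, x \in pivotal_dist q t -> #|pivotal_out x.2|%:Z = k.
Proof.
move=> hsum x hx; have [_ px [_ _ sS] card] := pivotal_dist_inv q01 uniq_t hx.
move: card; rewrite (perm_big _ leaves_t) big_enum /= hsum.
have /andP [p0 p1] := root_prob_ge0_le1 q01 t.
case: x hx px sS => w [[S s] p] /= _ -> sS card.
have hz : ((k - #|S|%:Z)%:~R : R) = root_prob q t.
  by rewrite intrB -card addrC addKr.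
rewrite /pivotal_out; case: eqP => [p_eq1 | p_neq1].
  apply: (@intr_inj R); rewrite cardsU1 sS -card p_eq1.
  by rewrite -[LHS]/((1 + #|S|)%:R : R) natrD addrC.
have z0 : 0 <= k - #|S|%:Z by rewrite -(ler0z R) hz.
have z1 : k - #|S|%:Z < 1.
  by rewrite -(ltrz1 R) hz lt_neqAle p1 andbT; apply/eqP.
by apply/eqP; rewrite eq_sym -subr_eq0 eq_le -ltzD1 add0r z1.
Qed.

Lemma pivotal_mu_homogeneous (k : int) : \sum_i q i = k%:~R ->
  forall A, pivotal_mu q t A != 0 -> #|A|%:Z = k.
Proof.
move=> hsum A; apply: contraNeq => cardA; apply/eqP.
rewrite /pivotal_mu big1_seq // => x /andP [_ hx].
case: eqP => [outA | _]; last by rewrite mulr0.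
by move: cardA; rewrite -outA (card_pivotal_out hsum hx) eqxx.
Qed.

Lemma prob_pivotal (P : pred {set 'I_n}) :
  prob (pivotal_mu q t) P = \sum_(x <- pivotal_dist q t) x.1 * (P (pivotal_out x.2))%:R.
Proof.
rewrite /prob /pivotal_mu exchange_big /=; apply: eq_bigr => x _.
rewrite -mulr_sumr; congr (_ * _).
rewrite big_mkcond (bigD1 (pivotal_out x.2)) //= eqxx big1 ?addr0; first by case: (P _).
by move=> A /negPf AnO; rewrite eq_sym AnO; case: (P A).
Qed.

Definition subset_weight (T : {set 'I_n}) : 'I_n -> bool -> R :=
  fun k => if k \in T then win else wany.

Lemma wprod_subset_weight (T A : {set 'I_n}) (L : seq 'I_n) :
  {subset T <= L} -> wprod (subset_weight T) L A = (T \subset A)%:R.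
Proof.
move=> TL; rewrite /wprod /subset_weight; case: (boolP (T \subset A)) => TA.
  by rewrite big1_seq // => k _; case: (boolP (k \in T)) => // /(subsetP TA) ->.
case/subsetPn: TA => k kT kA; apply/eqP; rewrite prodf_seq_eq0; apply/hasP.
by exists k; [exact: TL | rewrite /= kT /win (negPf kA)].
Qed.

Lemma prob_superset_pivotal (T : {set 'I_n}) :
  prob_superset (pivotal_mu q t) T =
  lin (root_prob q t != 1)%:R (root_prob q t == 1)%:R
      (pivotal_wexp q (subset_weight T) t).
Proof.
rewrite /prob_superset prob_pivotal /pivotal_wexp lin_sum.
apply: eq_big_seq => x hx; have [_ px _ _] := pivotal_dist_inv q01 uniq_t hx.
case: x hx px => w [[S s] p] /= _ ->; congr (_ * _).
have TL : {subset T <= leaves t} by move=> k _; exact: mem_t.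
rewrite /pivotal_out /lin /wpair /= !wprod_subset_weight //.
by case: eqP => _; rewrite /= ?mul0r ?mul1r ?addr0 ?add0r.
Qed.

Lemma pivotal_mu_cond_neg_correlated : cond_neg_correlated (pivotal_mu q t).
Proof.
move=> S i j iS jS ij.
have sw0 k b : 0 <= subset_weight S k b.
  by rewrite /subset_weight /win /wany; case: (k \in S) => //; case: b.
have anti := pivotal_wexp_anticorr q01 uniq_t sw0 (mem_t i) (mem_t j) ij.
have reweightE (T : {set 'I_n}) X Y :
    (forall k, subset_weight T k = reweight (reweight (subset_weight S) i X) j Y k) ->
    pivotal_wexp q (subset_weight T) t =
    pivotal_wexp q (reweight (reweight (subset_weight S) i X) j Y) t.
  by move=> E; apply: eq_pivotal_wexp => k _; exact: E.
rewrite !prob_superset_pivotal [X in _ <= X]mulrC.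
rewrite (reweightE (j |: (i |: S)) win win) ?(reweightE S wany wany)
  ?(reweightE (i |: S) win wany) ?(reweightE (j |: S) wany win).
- by apply: anti; rewrite ler0n.
all: move=> k; rewrite /subset_weight /reweight ?inE.
all: case: (k =P j) => [->|_].
all: try by rewrite ?eqxx ?(negPf jS) ?(eq_sym j i) ?(negPf ij) ?orbF ?orbT.
all: by case: (k =P i) => [->|_]; rewrite ?eqxx ?(negPf iS) ?(negPf ij) ?orbF ?orbT.
Qed.

End PivotalLaw.

Theorem mainTheorem5 (R : realFieldType) (n : nat) (t : btree n)
  (q : 'I_n -> R) (k : int) :
  perm_eq (leaves t) (enum 'I_n) ->
  (forall i, 0 <= q i <= 1) ->
  \sum_(i : 'I_n) q i = k%:~R ->
  let mu := pivotal_mu q t in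
  k_homogeneous mu k /\
  (forall S : {set 'I_n}, 0 < prob mu (fun A => S \subset A) ->
   forall i : 'I_n, i \notin S ->
   0 < prob mu (fun A => (i \in A) && (S \subset A)) ->
     \sum_(j : 'I_n) `|influence mu S i j|
       = 2 - 2 * cond_prob mu (fun A => i \in A) (fun A => S \subset A)
     /\ \sum_(j : 'I_n) `|influence mu S i j| <= 2) /\
  one_sided_linf_indep mu 2.
Proof.
move=> leaves_t q01 hsum mu.
have hom := pivotal_mu_homogeneous q01 leaves_t hsum.
have ncor := pivotal_mu_cond_neg_correlated q01 leaves_t.
have sum_infl (S : {set 'I_n}) i : i \notin S -> 0 < prob mu (fun A => S \subset A) ->
    0 < prob mu (fun A => (i \in A) && (S \subset A)) ->
    \sum_j `|influence mu S i j| =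
    2 - 2 * cond_prob mu (fun A => i \in A) (fun A => S \subset A) /\
    \sum_j `|influence mu S i j| <= 2.
  rewrite prob_mem_subset cond_prob_superset => iS PS PiS.
  rewrite (sum_norm_influence iS PS PiS hom ncor); split=> //.
  by rewrite lerBlDr lerDl mulr_ge0 // divr_ge0 // ltW.
split; [|split].
- by move=> A /gt_eqF /negbT; exact: hom.
- by move=> S PS i iS PiS; exact: sum_infl.
move=> S PS i PiS; case: (boolP (i \in S)) => iS.
  by rewrite big1 ?ler0n // => j _; rewrite influence_memS ?normr0.
by case: (sum_infl S i iS PS PiS).
Qed.
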